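(* Let $H$ be a graph, $r\ge\omega_0(H)$, $1\le u\le r$, and $n\ge u$. Let $d$ be a $u$-clique of $\mathrm{T}_r(n)$ whose vertices lie in $u$ parts of $\mathrm{T}_r(n)$ of largest sizes (i.e., the sizes of these $u$ parts are the $u$ largest part sizes, with multiplicity), and let $c$ be an arbitrary $u$-clique of $\mathrm{T}_r(n)$. Then the number of subgraphs of $\mathrm{T}_r(n)$ isomorphic to $H$ that contain at least one vertex of $c$ is at least the number that contain at least one vertex of $d$, and the latter number equals $\mathcal{N}(H,\mathrm{T}_r(n))-\mathcal{N}(H,\mathrm{T}_r(n-u))$.
   Context: All graphs are finite and simple. $\mathcal{N}(H,G)$ is the number of (not necessarily induced) subgraphs of $G$ isomorphic to $H$. $\mathrm{T}_r(n)$ is the Turán graph: complete $r$-partite on $n$ vertices with part sizes $\lfloor n/r\rfloor$ or $\lceil n/r\rceil$ ($\mathrm{T}_r(0)$ is the empty graph). For a graph $J$, $\omega_0(J)$ is the least positive integer such that for every integer $r\ge\omega_0(J)$ and every $n\ge1$, every $n$-vertex $K_{r+1}$-free graph $G$ satisfies $\mathcal{N}(J,G)\le\mathcal{N}(J,\mathrm{T}_r(n))$ (it exists by a theorem of Morrison, Nir, Norin, Rzążewski and Wesolek). *)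

From mathcomp Require Import all_boot.
Set Implicit Arguments. Unset Strict Implicit. Unset Printing Implicit Defensive.

(* A simple graph on a finite vertex type V is a symmetric irreflexive
   relation e : rel V.  A (not necessarily induced) subgraph of G is a pair
   (A, E) of a vertex set A and a set E of 2-element vertex sets (edges).   *)

Definition is_copy (HV V : finType) (eH : rel HV) (eG : rel V)
    (A : {set V}) (E : {set {set V}}) : bool :=
  [exists f : {ffun HV -> V},
    [&& injectiveb f, f @: setT == A,
        [forall x, forall y, eH x y ==> eG (f x) (f y)] &
        E == [set [set f p.1; f p.2] | p in [pred p : HV * HV | eH p.1 p.2]]]].

Definition copies (HV V : finType) (eH : rel HV) (eG : rel V) :
    {set {set V} * {set {set V}}} :=
  [set p | is_copy eH eG p.1 p.2].

Definition NumCopies (HV V : finType) (eH : rel HV) (eG : rel V) : nat :=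
  #|copies eH eG|.

Definition NumCopiesMeeting (HV V : finType) (eH : rel HV) (eG : rel V)
    (c : {set V}) : nat :=
  #|[set p in copies eH eG | p.1 :&: c != set0]|.

(* Turan graph T_r(n) on vertices 0..n-1; vertex i lies in part i %% r. *)
Definition turan_adj (r n : nat) : rel 'I_n :=
  fun i j => (i %% r != j %% r).

Arguments turan_adj r n : clear implicits.

Definition part_size (r n k : nat) : nat := #|[set i : 'I_n | i %% r == k]|.

Definition is_clique (V : finType) (eG : rel V) (c : {set V}) : bool :=
  [forall x in c, forall y in c, (x != y) ==> eG x y].

Definition Kfree (V : finType) (k : nat) (eG : rel V) : bool :=
  ~~ [exists S : {set V}, (#|S| == k) && is_clique eG S].

Definition omega0_prop (HV : finType) (eH : rel HV) (m : nat) : Prop :=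
  forall r, m <= r -> forall n, 0 < n ->
  forall eG : rel 'I_n, symmetric eG -> irreflexive eG -> Kfree r.+1 eG ->
    NumCopies eH eG <= NumCopies eH (turan_adj r n).

Definition is_omega0 (HV : finType) (eH : rel HV) (w : nat) : Prop :=
  [/\ 0 < w, omega0_prop eH w & forall m, 0 < m -> omega0_prop eH m -> w <= m].

(* the parts met by d are parts of largest size (u largest sizes with
   multiplicity): every part not met by d is no larger than any part met. *)
Definition in_largest_parts (r n : nat) (d : {set 'I_n}) : Prop :=
  forall k l : nat, k \in [seq (nat_of_ord i) %% r | i <- enum d] ->
    l < r -> l \notin [seq (nat_of_ord i) %% r | i <- enum d] ->
    part_size r n l <= part_size r n k.

From mathcomp Require Import all_boot zify.
Set Implicit Arguments. Unset Strict Implicit. Unset Printing Implicit Defensive.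

(* Every copy of H in T_r(n) either meets a vertex set C or lies in T_r(n) - C.
   If d is a u-clique in u largest parts, removing it leaves part sizes that
   still differ by at most one, so T_r(n) - d is isomorphic to T_r(n-u) and
   the copies avoiding d number N(H,T_r(n-u)).  For an arbitrary u-set c,
   T_r(n) - c is still K_{r+1}-free on n-u vertices, so as r >= omega_0(H) it
   has at most N(H,T_r(n-u)) copies; comparing the two splittings of
   N(H,T_r(n)) gives both claims. *)

Section Copies.
Variables (HV : finType) (eH : rel HV).

Definition NumCopiesAvoiding (V : finType) (eG : rel V) (C : {set V}) : nat :=
  #|[set p in copies eH eG | p.1 :&: C == set0]|.

Lemma NumCopies_split (V : finType) (eG : rel V) (C : {set V}) :
  NumCopies eH eG = NumCopiesMeeting eH eG C + NumCopiesAvoiding eG C.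
Proof.
rewrite /NumCopies /NumCopiesMeeting /NumCopiesAvoiding
  -(cardsID [set p : {set V} * {set {set V}} | p.1 :&: C != set0] (copies eH eG)).
by congr (_ + _); apply: eq_card => p; rewrite !inE ?negbK andbC.
Qed.

Section Pullback.
Variables (V W : finType) (eG : rel V) (eW : rel W) (C : {set V}) (h : W -> V).
Hypotheses (h_inj : injective h) (h_img : h @: setT = ~: C)
           (h_adj : forall x y, eW x y = eG (h x) (h y)).

Definition push_copy (p : {set W} * {set {set W}}) : {set V} * {set {set V}} :=
  (h @: p.1, [set h @: (e : {set W}) | e in p.2]).

Lemma push_copy_inj : injective push_copy.
Proof.
by move=> [A1 E1] [A2 E2] [/(imset_inj h_inj) -> /(imset_inj (imset_inj h_inj)) ->].
Qed.

Lemma push_copyP p : is_copy eH eW p.1 p.2 ->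
  is_copy eH eG (push_copy p).1 (push_copy p).2 && ((push_copy p).1 :&: C == set0).
Proof.
case: p => A E /=; case/existsP=> f /and4P [/injectiveP f_inj /eqP <- /forallP f_adj /eqP ->].
apply/andP; split; last first.
  by rewrite setI_eq0 disjoints_subset -h_img imsetS ?subsetT.
apply/existsP; exists [ffun x => h (f x)]; apply/and4P; split.
- by apply/injectiveP=> x y; rewrite !ffunE => /h_inj /f_inj.
- by rewrite -imset_comp; apply/eqP/eq_imset=> x; rewrite ffunE.
- apply/forallP=> x; apply/forallP=> y; rewrite !ffunE -h_adj; exact: (forallP (f_adj x)).
- rewrite -imset_comp; apply/eqP/eq_imset=> p /=.
  by rewrite imsetU1 imset_set1 !ffunE.
Qed.

Lemma pull_copyP A E : is_copy eH eG A E -> A :&: C == set0 ->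
  exists2 p, is_copy eH eW p.1 p.2 & push_copy p = (A, E).
Proof.
case/existsP=> g /and4P [/injectiveP g_inj /eqP g_img /forallP g_adj /eqP ->] AC.
have g_in_img x : g x \in h @: setT.
  rewrite h_img inE; apply: contraTN AC => gC; apply/set0Pn; exists (g x).
  by rewrite inE gC -g_img imset_f.
have gh x : exists y, g x = h y by case/imsetP: (g_in_img x) => y _ ->; exists y.
have [f fK] := fin_all_exists gh.
exists ([ffun x => f x] @: setT,
        [set [set [ffun x => f x] q.1; [ffun x => f x] q.2] | q in [pred q | eH q.1 q.2]]).
  apply/existsP; exists [ffun x => f x]; rewrite eqxx eqxx andbT /=; apply/andP; split.
    by apply/injectiveP=> x y; rewrite !ffunE => fxy; apply: g_inj; rewrite !fK fxy.
  apply/forallP=> x; apply/forallP=> y; rewrite !ffunE h_adj -!fK.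
  exact: (forallP (g_adj x)).
rewrite /push_copy /= -g_img -!imset_comp; congr (_, _); apply: eq_imset => q /=.
  by rewrite ffunE fK.
by rewrite imsetU1 imset_set1 !ffunE -!fK.
Qed.

Lemma NumCopies_pullback : NumCopies eH eW = NumCopiesAvoiding eG C.
Proof.
rewrite /NumCopies -(card_imset _ push_copy_inj); apply: eq_card => q.
rewrite inE; apply/imsetP/andP.
- by case=> p; rewrite inE => /push_copyP /andP [? ?] ->; split; rewrite ?inE.
- case: q => A E; rewrite inE /= => -[cp AC].
  by have [p cpp <-] := pull_copyP cp AC; exists p; rewrite ?inE.
Qed.

End Pullback.

Lemma eq_NumCopies (V : finType) (e1 e2 : rel V) :
  e1 =2 e2 -> NumCopies eH e1 = NumCopies eH e2.
Proof.
move=> e12; rewrite (@NumCopies_pullback _ _ e2 _ set0 id) //.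
- by rewrite /NumCopiesAvoiding; apply: eq_card => p; rewrite !inE setI0 eqxx andbT.
- by rewrite setC0 imset_id.
Qed.

End Copies.

Lemma fiberwise_bijection (V W : finType) (L : eqType) (p : V -> L) (q : W -> L)
    (A : {set W}) :
  (forall l, #|[set x | p x == l]| = #|[set y in A | q y == l]|) ->
  exists h : V -> W, [/\ injective h, h @: setT = A & forall x, q (h x) = p x].
Proof.
move=> fibers; case: (set_0Vmem A) => [A0 | [w0 _]].
  have V0 (x : V) : False.
    have : 0 < #|[set y in A | q y == p x]|.
      by rewrite -fibers; apply/card_gt0P; exists x; rewrite inE.
    by case/card_gt0P=> y; rewrite A0 inE in_set0.
  exists (fun x => match V0 x with end); split=> [x | | x]; try case: (V0 x).
  by apply/setP=> y; rewrite A0 in_set0; apply/imsetP=> -[x]; case: (V0 x).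
pose X l := enum [set x | p x == l].
pose Y l := enum [set y in A | q y == l].
have size_XY l : size (X l) = size (Y l) by rewrite -!cardE.
have mem_X x l : (x \in X l) = (p x == l) by rewrite mem_enum inE.
have mem_Y y l : (y \in Y l) = (y \in A) && (q y == l) by rewrite mem_enum inE.
pose h x := nth w0 (Y (p x)) (index x (X (p x))).
have index_X x : index x (X (p x)) < size (Y (p x)) by rewrite -size_XY index_mem mem_X.
have hY x : h x \in Y (p x) by apply: mem_nth.
have hq x : q (h x) = p x by apply/eqP; move: (hY x); rewrite mem_Y => /andP [].
exists h; split=> //.
- move=> x y hxy; have pxy : p x = p y by rewrite -hq hxy hq.
  have ix := index_X x; rewrite pxy in ix.
  move: hxy; rewrite /h pxy => /eqP; rewrite nth_uniq ?enum_uniq ?ix ?index_X //.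
  by move/eqP; apply: (index_inj x); rewrite mem_X ?pxy.
- apply/setP=> y; apply/imsetP/idP=> [[x _ ->] | yA].
    by move: (hY x); rewrite mem_Y => /andP [].
  have yY : y \in Y (q y) by rewrite mem_Y yA eqxx.
  have index_Y : index y (Y (q y)) < size (X (q y)) by rewrite size_XY index_mem.
  have [x0 _] : exists x0 : V, true by case: (X (q y)) index_Y => // x0; exists x0.
  set x := nth x0 (X (q y)) (index y (Y (q y))).
  have px : p x = q y by apply/eqP; rewrite -mem_X mem_nth.
  by exists x; rewrite // /h px index_uniq ?enum_uniq // nth_index.
Qed.

Definition balanced r (f : 'I_r -> nat) : Prop := forall k l, f k <= (f l).+1.

Lemma balanced_values r (f : 'I_r -> nat) N : balanced f -> \sum_k f k = N ->
  (forall k, f k = N %/ r \/ f k = (N %/ r).+1) /\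
  #|[set k | f k == (N %/ r).+1]| = N %% r.
Proof.
case: r f => [|r] f bal <-.
  by split=> [[] //|]; rewrite big_ord0 mod0n; apply: eq_card0 => -[].
have [k0 _ f_min] := @arg_minnP _ (@ord0 r) predT f isT.
set b := f k0 in f_min.
have f_vals k : f k = b \/ f k = b.+1 by have := f_min k isT; have := bal k k0; lia.
set c := #|[set k | f k == b.+1]|.
have sumE : \sum_k f k = b * r.+1 + c.
  rewrite (eq_bigr (fun k => b + (f k == b.+1))); last first.
    by move=> k _; case: (f_vals k) => ->; lia.
  rewrite big_split sum_nat_const card_ord mulnC /c -sum1dep_card.
  by congr (_ + _); rewrite [RHS]big_mkcond; apply: eq_bigr => k _; case: (_ == _).
have c_lt : c < r.+1.
  rewrite -[r.+1]card_ord (cardD1 k0) ltnS (subset_leq_card _) //.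
  apply/subsetP=> k; rewrite !inE andbT => /eqP fk.
  by apply/eqP=> ek; move: fk; rewrite ek; lia.
by rewrite sumE divnMDl // modnMDl divn_small ?addn0 ?modn_small.
Qed.

Lemma balanced_fibers r (f g : 'I_r -> nat) :
  balanced f -> balanced g -> \sum_k f k = \sum_k g k ->
  forall v, #|[set k | f k == v]| = #|[set k | g k == v]|.
Proof.
move=> bf bg sum_fg v; set N := \sum_k g k in sum_fg.
have [f_vals f_top] := balanced_values bf sum_fg.
have [g_vals g_top] := balanced_values bg (erefl N).
have bottomE (h : 'I_r -> nat) : (forall k, h k = N %/ r \/ h k = (N %/ r).+1) ->
    [set k | h k == N %/ r] = ~: [set k | h k == (N %/ r).+1].
  by move=> h_vals; apply/setP=> k; rewrite !inE; case: (h_vals k) => ->; lia.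
have [->|ne_top] := eqVneq v (N %/ r).+1; first by rewrite f_top g_top.
have [->|ne_bot] := eqVneq v (N %/ r).
  rewrite (bottomE f) // (bottomE g) //.
  have := cardsC [set k | f k == (N %/ r).+1].
  by have := cardsC [set k | g k == (N %/ r).+1]; lia.
have emptyE (h : 'I_r -> nat) : (forall k, h k = N %/ r \/ h k = (N %/ r).+1) ->
    [set k | h k == v] = set0.
  by move=> h_vals; apply/setP=> k; rewrite !inE; case: (h_vals k) => ->; lia.
by rewrite (emptyE f) // (emptyE g).
Qed.

Definition part_of r (r0 : 0 < r) (i : nat) : 'I_r := Ordinal (ltn_pmod i r0).

Lemma turan_adjE r n (r0 : 0 < r) (i j : 'I_n) :
  turan_adj r n i j = (part_of r0 i != part_of r0 j).
Proof. by []. Qed.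

Lemma part_sizeE r N k : 0 < r -> k < r -> part_size r N k = N %/ r + (k < N %% r).
Proof.
move=> r0 kr; rewrite /part_size -sum1dep_card big_mkcond /=.
elim: N => [|N IH]; first by rewrite big_ord0 div0n mod0n.
rewrite big_ord_recr /= IH divnS // modnS.
have ml := ltn_pmod N r0.
have [dvd_r|] := boolP (r %| N.+1); last by case: eqP; lia.
have -> : N %% r = r.-1.
  have : r %| N %/ r * r + (N %% r).+1 by rewrite addnS -divn_eq.
  by rewrite dvdn_addr ?dvdn_mull // => /(dvdn_leq (ltn0Sn _)); lia.
by case: eqP; lia.
Qed.

Lemma sum_card_parts r (r0 : 0 < r) (n : nat) (A : {set 'I_n}) :
  \sum_(l < r) #|[set y in A | part_of r0 y == l]| = #|A|.
Proof.
rewrite -sum1_card (partition_big (fun y : 'I_n => part_of r0 y) predT) //=.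
by apply: eq_bigr => l _; rewrite -sum1_card; apply: eq_bigl => y; rewrite !inE.
Qed.

Lemma cardsC_ord n (A : {set 'I_n}) : #|~: A| = n - #|A|.
Proof. by rewrite cardsCs setCK card_ord. Qed.

Lemma part_size_balanced r N (r0 : 0 < r) : balanced (fun l : 'I_r => part_size r N l).
Proof. by move=> k l; rewrite !part_sizeE //; have := ltn_pmod N r0; lia. Qed.

Lemma turan_embedding r n N (r0 : 0 < r) (A : {set 'I_n}) :
  #|A| = N -> balanced (fun l : 'I_r => #|[set y in A | part_of r0 y == l]|) ->
  exists h : 'I_N -> 'I_n, [/\ injective h, h @: setT = A &
    forall i j, turan_adj r N i j = turan_adj r n (h i) (h j)].
Proof.
set s := fun l : 'I_r => _; move=> cardA bal_s.
pose t (l : 'I_r) := part_size r N l.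
have tE l : t l = #|[set i : 'I_N | part_of r0 i == l]|.
  by apply: eq_card => i; rewrite !inE.
have sum_t : \sum_l t l = \sum_l s l.
  rewrite (eq_bigr _ (fun l _ => tE l)) !sum_card_parts cardA.
  transitivity #|[set: 'I_N]|; last by rewrite cardsT card_ord.
  by rewrite -(sum_card_parts r0); apply: eq_bigr => l _; apply: eq_card => i; rewrite !inE.
(* Both part-size families are balanced with sum N, so they agree up to a
   permutation sg of the parts. *)
have [sg [sg_inj sg_onto sg_t]] :
    exists sg : 'I_r -> 'I_r, [/\ injective sg, sg @: setT = setT & forall l, s (sg l) = t l].
  apply: fiberwise_bijection => v.
  rewrite (balanced_fibers (part_size_balanced N r0) bal_s sum_t).
  by apply: eq_card => l; rewrite !inE.
have [h [h_inj h_onto h_part]] :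
    exists h : 'I_N -> 'I_n, [/\ injective h, h @: setT = A &
      forall i, part_of r0 (h i) = sg (part_of r0 i)].
  apply: (@fiberwise_bijection _ _ _ (fun i : 'I_N => sg (part_of r0 i))
                                  (fun y : 'I_n => part_of r0 y)) => l.
  have [k _ ->] : exists2 k, k \in setT & l = sg k by apply/imsetP; rewrite sg_onto.
  by rewrite -/(s (sg k)) sg_t tE; apply: eq_card => i; rewrite !inE (inj_eq sg_inj).
by exists h; split=> // i j; rewrite !(turan_adjE r0) !h_part (inj_eq sg_inj).
Qed.

Lemma clique_part_card_le1 r n (r0 : 0 < r) (d : {set 'I_n}) (l : 'I_r) :
  is_clique (turan_adj r n) d -> #|[set y in d | part_of r0 y == l]| <= 1.
Proof.
move=> d_clique; rewrite leqNgt; apply/card_gt1P => -[x [y []]].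
rewrite !inE => /andP [xd /eqP xl] /andP [yd /eqP yl] xy.
move: d_clique => /forallP /(_ x) /implyP /(_ xd) /forallP /(_ y) /implyP /(_ yd).
by rewrite xy (turan_adjE r0) xl yl eqxx.
Qed.

Lemma compl_clique_parts_balanced r n (r0 : 0 < r) (d : {set 'I_n}) :
  is_clique (turan_adj r n) d -> in_largest_parts r d ->
  balanced (fun l : 'I_r => #|[set y in ~: d | part_of r0 y == l]|).
Proof.
move=> d_clique d_largest k l.
set met := [seq (nat_of_ord i) %% r | i <- enum d] in d_largest.
pose in_d (j : 'I_r) := #|[set y in d | part_of r0 y == j]|.
have partE (j : 'I_r) : #|[set y in ~: d | part_of r0 y == j]| + in_d j = part_size r n j.
  rewrite addnC /part_size -(cardsID d [set y : 'I_n | y %% r == j]).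
  by congr (_ + _); apply: eq_card => y; rewrite !inE andbC.
have in_d_met (j : 'I_r) : (0 < in_d j) = (nat_of_ord j \in met).
  apply/card_gt0P/mapP => -[y].
    by rewrite inE => /andP [yd /eqP <-]; exists y; rewrite ?mem_enum.
  by rewrite mem_enum => yd jy; exists y; rewrite inE yd -val_eqE /= jy.
have := partE k; have := partE l; have := part_size_balanced n r0 k l.
have := clique_part_card_le1 r0 k d_clique; have := clique_part_card_le1 r0 l d_clique.
rewrite -/(in_d k) -/(in_d l).
case: (posnP (in_d k)) => [k_not | k_met]; last lia.
case: (posnP (in_d l)) => [l_not | l_met]; first lia.
have := d_largest l k; rewrite -!in_d_met l_met k_not => /(_ isT (ltn_ord k) isT); lia.
Qed.

Lemma Kfree_turan_pullback r n (W : finType) (h : W -> 'I_n) :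
  0 < r -> Kfree r.+1 (fun x y => turan_adj r n (h x) (h y)).
Proof.
move=> r0; apply/existsP => -[S /andP [/eqP cardS S_clique]].
have : #|[set part_of r0 (h x) | x in S]| = #|S|.
  apply: card_in_imset => x y xS yS xy; apply/eqP; apply: contraTT isT => x_ne_y.
  move: S_clique => /forallP /(_ x) /implyP /(_ xS) /forallP /(_ y) /implyP /(_ yS).
  by rewrite x_ne_y (turan_adjE r0) xy eqxx.
by rewrite cardS => parts_S; have := max_card [set part_of r0 (h x) | x in S];
  rewrite parts_S card_ord ltnn.
Qed.

Section TuranCopies.
Variables (HV : finType) (eH : rel HV) (r n : nat).
Hypothesis r0 : 0 < r.

Lemma NumCopiesAvoiding_turan_le m (C : {set 'I_n}) :
  omega0_prop eH m -> m <= r ->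
  NumCopiesAvoiding eH (turan_adj r n) C <= NumCopies eH (turan_adj r (n - #|C|)).
Proof.
move=> omega0_m mr.
have one_fiber (l : unit) :
    #|[set x : 'I_(n - #|C|) | tt == l]| = #|[set y in ~: C | tt == l]|.
  case: l; transitivity (n - #|C|).
    by rewrite -[RHS]card_ord; apply: eq_card => x; rewrite !inE.
  by rewrite -cardsC_ord; apply: eq_card => y; rewrite !inE andbT.
have [h [h_inj h_onto _]] := fiberwise_bijection one_fiber.
rewrite -(NumCopies_pullback eH (eW := fun x y => turan_adj r n (h x) (h y)) h_inj h_onto) //.
(* omega0_prop only speaks about graphs with at least one vertex. *)
have [N0 | N_pos] := posnP (n - #|C|).
  rewrite (eq_NumCopies eH (e2 := turan_adj r (n - #|C|))) // => i.
  by suff : false by []; have := ltn_ord i; lia.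
apply: omega0_m => //; last exact: Kfree_turan_pullback.
- by move=> x y; rewrite /turan_adj eq_sym.
- by move=> x; rewrite /turan_adj eqxx.
Qed.

Lemma NumCopiesAvoiding_largest_clique (d : {set 'I_n}) :
  is_clique (turan_adj r n) d -> in_largest_parts r d ->
  NumCopiesAvoiding eH (turan_adj r n) d = NumCopies eH (turan_adj r (n - #|d|)).
Proof.
move=> d_clique d_largest.
have [h [h_inj h_onto h_adj]] :=
  turan_embedding (cardsC_ord d) (compl_clique_parts_balanced r0 d_clique d_largest).
by rewrite (NumCopies_pullback eH h_inj h_onto h_adj).
Qed.

End TuranCopies.

Theorem mainTheorem12 (HV : finType) (eH : rel HV)
  (eH_sym : symmetric eH) (eH_irr : irreflexive eH)
  (w r u n : nat) (hw : is_omega0 eH w) (hwr : w <= r)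
  (hu1 : 1 <= u) (hur : u <= r) (hun : u <= n)
  (c d : {set 'I_n})
  (hc : #|c| = u) (hcc : is_clique (turan_adj r n) c)
  (hd : #|d| = u) (hdc : is_clique (turan_adj r n) d)
  (hdl : in_largest_parts r d) :
  NumCopiesMeeting eH (turan_adj r n) d <= NumCopiesMeeting eH (turan_adj r n) c /\
  NumCopiesMeeting eH (turan_adj r n) d =
    NumCopies eH (turan_adj r n) - NumCopies eH (turan_adj r (n - u)).
Proof.
have [w_pos omega0_w _] := hw.
have r0 : 0 < r by lia.
have avoid_c := NumCopiesAvoiding_turan_le r0 c omega0_w hwr.
have avoid_d := NumCopiesAvoiding_largest_clique eH r0 hdc hdl.
rewrite hc in avoid_c; rewrite hd in avoid_d.
have := NumCopies_split eH (turan_adj r n) c; have := NumCopies_split eH (turan_adj r n) d.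
lia.
Qed.
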